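(* Let $\mu^\ast$ be an upper quasi-density on $\mathbb{H}$, and let $X\subseteq Y\subseteq\mathbb{H}$, where $Y$ has finite symmetric difference with a finite union of sets of the form $q\cdot\mathbb{H}+r$ ($q\in\mathbb{N}^+$, $r\in\mathbb{N}$) (equivalently: there are $k\in\mathbb{N}^+$ and $\mathcal{H}\subseteq\{0,1,\dots,k-1\}$ such that $Y\,\triangle\,\bigcup_{h\in\mathcal{H}}(k\cdot\mathbb{H}+h)$ is finite; this includes the case where $Y$ itself is such a finite union). Then $\mu^\ast(X)\le\mu^\ast(Y)$.
   Context: $\mathbb{N}=\{0,1,2,\dots\}$, $\mathbb{N}^+=\{1,2,\dots\}$; $\mathbb{H}$ is one of $\mathbb{Z},\mathbb{N},\mathbb{N}^+$. For $X\subseteq\mathbb{H}$, $k\in\mathbb{N}^+$, $h\in\mathbb{N}$, $k\cdot X+h:=\{kx+h:x\in X\}$. An upper quasi-density on $\mathbb{H}$ is a function $\mu^\ast:\mathcal{P}(\mathbb{H})\to\mathbb{R}$ with $\mu^\ast(\mathbb{H})=1$, $\mu^\ast(X)\le1$ for all $X$, $\mu^\ast(X\cup Y)\le\mu^\ast(X)+\mu^\ast(Y)$ for all $X,Y$, and $\mu^\ast(k\cdot X+h)=\frac1k\mu^\ast(X)$ for all $X\subseteq\mathbb{H}$, $h,k\in\mathbb{N}^+$. *)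

From Stdlib Require Import ZArith Reals List.
Open Scope R_scope.

Inductive HKind : Type := HZ | HN | HNpos.

Definition inH (H : HKind) (z : Z) : Prop :=
  match H with
  | HZ => True
  | HN => (0 <= z)%Z
  | HNpos => (1 <= z)%Z
  end.

Definition subsetH (H : HKind) (X : Z -> Prop) : Prop := forall z, X z -> inH H z.

Definition set_union (X Y : Z -> Prop) : Z -> Prop := fun z => X z \/ Y z.

Definition affine_image (k h : Z) (X : Z -> Prop) : Z -> Prop :=
  fun z => exists x, X x /\ z = (k * x + h)%Z.

Definition upper_quasi_density (H : HKind) (mu : (Z -> Prop) -> R) : Prop :=
  mu (inH H) = 1 /\
  (forall X, subsetH H X -> mu X <= 1) /\
  (forall X Y, subsetH H X -> subsetH H Y -> mu (set_union X Y) <= mu X + mu Y) /\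
  (forall X (h k : Z), subsetH H X -> (1 <= h)%Z -> (1 <= k)%Z ->
      mu (affine_image k h X) = / IZR k * mu X).

Definition finite_set (X : Z -> Prop) : Prop := exists l : list Z, forall z, X z -> In z l.

Definition sym_diff (X Y : Z -> Prop) : Z -> Prop :=
  fun z => (X z /\ ~ Y z) \/ (Y z /\ ~ X z).

Definition union_APs (H : HKind) (ps : list (Z * Z)) : Z -> Prop :=
  fun z => exists p, In p ps /\ affine_image (fst p) (snd p) (inH H) z.

Definition almost_AP_union (H : HKind) (Y : Z -> Prop) : Prop :=
  exists ps : list (Z * Z),
    (forall p, In p ps -> (1 <= fst p)%Z /\ (0 <= snd p)%Z) /\
    finite_set (sym_diff Y (union_APs H ps)).

From Stdlib Require Import ZArith Reals List.
From Stdlib Require Import Lia Lra Classical FunctionalExtensionality PropExtensionality.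
Open Scope R_scope.

(* An upper quasi-density need not be monotone, but it is so
   below a set Y that is, up to finitely many elements, a union of residue
   classes k.H + j (1 <= j <= k).  Write g (resp. b) for the number of
   residue classes contained (resp. not contained) in Y, so g + b = k.
   - Every finite subset of H has density 0 (singletons have density 0 by
     the scaling and translation axioms; then use subadditivity).
   - Upper bound: X is covered by its g slices X /\ (k.H + j), each of the
     form k.X' + j and hence of density <= 1/k, plus a finite set; so
     mu X <= g/k.
   - Lower bound: H is covered by Y, the b missing classes (each of density
     1/k) and a finite set; so 1 <= mu Y + b/k, i.e. g/k <= mu Y.
   Finally a finite union of progressions q.H + r is, outside a finite set,
   a union of residue classes modulo a common multiple k of the moduli q. *)

Lemma finite_subset (A B : Z -> Prop) :
  (forall z, A z -> B z) -> finite_set B -> finite_set A.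
Proof. intros AB [l Hl]. exists l. auto. Qed.

Lemma finite_union (A B : Z -> Prop) :
  finite_set A -> finite_set B -> finite_set (fun z => A z \/ B z).
Proof.
  intros [la Ha] [lb Hb]. exists (la ++ lb).
  intros z [Hz | Hz]; apply in_or_app; auto.
Qed.

Lemma finite_interval (m n : Z) : finite_set (fun z => (m <= z <= n)%Z).
Proof.
  exists (map (fun i => (m + Z.of_nat i)%Z) (seq 0 (S (Z.to_nat (n - m))))).
  intros z Hz. apply in_map_iff. exists (Z.to_nat (z - m)).
  split; [lia | apply in_seq; lia].
Qed.

Lemma mu_ext (mu : (Z -> Prop) -> R) (A B : Z -> Prop) :
  (forall z, A z <-> B z) -> mu A = mu B.
Proof.
  intros E. f_equal. apply functional_extensionality; intro z.
  apply propositional_extensionality; auto.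
Qed.

Definition singleton (a : Z) : Z -> Prop := fun z => z = a.

Lemma affine_image_singleton (k h a : Z) :
  forall z, affine_image k h (singleton a) z <-> singleton (k * a + h)%Z z.
Proof.
  unfold affine_image, singleton; split.
  - intros [x [-> ->]]. reflexivity.
  - intros ->. exists a; auto.
Qed.

Definition bigU (js : list Z) (F : Z -> Z -> Prop) : Z -> Prop :=
  fun z => exists j, In j js /\ F j z.

Lemma inH_affine (H : HKind) (x k j : Z) :
  inH H x -> (1 <= k)%Z -> (1 <= j)%Z -> inH H (k * x + j).
Proof. destruct H; simpl; intros; auto; nia. Qed.

(* "z is large": beyond the finitely many boundary effects of N or N^+. *)
Definition large (H : HKind) (M z : Z) : Prop :=
  match H with HZ => True | _ => (M <= z)%Z end.

Lemma finite_not_large (H : HKind) (M : Z) :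
  finite_set (fun z => inH H z /\ ~ large H M z).
Proof.
  destruct H; [exists nil; intros z [_ Hz]; exact (Hz I) | |];
    apply (finite_subset _ (fun z => (0 <= z <= M)%Z)); try apply finite_interval;
    intros z [Hz Hl]; simpl in *; lia.
Qed.

Lemma progression_large (H : HKind) (q r M z : Z) :
  (1 <= q)%Z -> (0 <= r)%Z -> (q + r <= M)%Z -> large H M z ->
  (affine_image q r (inH H) z <-> (q | z - r)%Z).
Proof.
  intros Hq Hr HM Hz; split.
  - intros [x [_ ->]]. exists x; ring.
  - intros [c Hc]. exists c. split; [|lia].
    destruct H; simpl in *; auto; nia.
Qed.

Definition residues (k : Z) : list Z := map Z.of_nat (seq 1 (Z.to_nat k)).

Lemma in_residues (k j : Z) : In j (residues k) <-> (1 <= j <= k)%Z.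
Proof.
  unfold residues; rewrite in_map_iff; split.
  - intros [n [<- Hn]]. apply in_seq in Hn. lia.
  - intros Hj. exists (Z.to_nat j). split; [lia | apply in_seq; lia].
Qed.

Lemma length_residues (k : Z) : length (residues k) = Z.to_nat k.
Proof. unfold residues. rewrite length_map, length_seq. reflexivity. Qed.

Lemma residue_representative (k z : Z) :
  (1 <= k)%Z -> exists j, In j (residues k) /\ (k | z - j)%Z.
Proof.
  intros Hk. exists ((z - 1) mod k + 1)%Z.
  pose proof (Z.mod_pos_bound (z - 1) k ltac:(lia)).
  pose proof (Z.div_mod (z - 1) k ltac:(lia)).
  split; [apply in_residues; lia | exists ((z - 1) / k)%Z; lia].
Qed.

Definition residue_class (H : HKind) (k j : Z) : Z -> Prop := affine_image k j (inH H).

Definition residue_union (H : HKind) (k : Z) (good : Z -> bool) : Z -> Prop :=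
  bigU (filter good (residues k)) (residue_class H k).

Lemma residue_class_subsetH (H : HKind) (k j : Z) :
  (1 <= k)%Z -> (1 <= j)%Z -> subsetH H (residue_class H k j).
Proof. intros Hk Hj z [x [Hx ->]]. apply inH_affine; auto. Qed.

Lemma residue_union_subsetH (H : HKind) (k : Z) (good : Z -> bool) :
  (1 <= k)%Z -> subsetH H (residue_union H k good).
Proof.
  intros Hk z [j [Hj Hz]]. apply filter_In in Hj as [Hj _]. apply in_residues in Hj.
  exact (residue_class_subsetH H k j Hk ltac:(lia) z Hz).
Qed.

Lemma residue_classes_cover (H : HKind) (k : Z) : (1 <= k)%Z ->
  finite_set (fun z => inH H z /\
                       ~ exists j, In j (residues k) /\ residue_class H k j z).
Proof.
  intros Hk. eapply finite_subset; [|apply (finite_not_large H (2 * k))].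
  intros z [Hz Hnot]. split; [exact Hz|]. intro Hl. apply Hnot.
  destruct (residue_representative k z Hk) as [j [Hj Hkj]].
  pose proof (proj1 (in_residues k j) Hj).
  exists j. split; [exact Hj|]. apply (progression_large H k j (2 * k)); auto; lia.
Qed.

Section QuasiDensity.

Variable H : HKind.
Variable mu : (Z -> Prop) -> R.
Hypothesis Hmu : upper_quasi_density H mu.

Let mu_H : mu (inH H) = 1 := proj1 Hmu.
Let mu_le_1 : forall X, subsetH H X -> mu X <= 1 := proj1 (proj2 Hmu).
Let mu_subadd : forall X Y, subsetH H X -> subsetH H Y ->
  mu (set_union X Y) <= mu X + mu Y := proj1 (proj2 (proj2 Hmu)).
Let mu_scale : forall X h k, subsetH H X -> (1 <= h)%Z -> (1 <= k)%Z ->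
  mu (affine_image k h X) = / IZR k * mu X := proj2 (proj2 (proj2 Hmu)).

Lemma mu_cover (A B C : Z -> Prop) :
  subsetH H B -> subsetH H C -> (forall z, A z <-> B z \/ C z) ->
  mu A <= mu B + mu C.
Proof. intros HB HC E. rewrite (mu_ext mu A (set_union B C)) by exact E. auto. Qed.

(* The empty set is its own image under z |-> 2 z + 1, so has density 0. *)
Lemma mu_empty : mu (fun _ => False) = 0.
Proof.
  assert (E := mu_scale (fun _ => False) 1 2 ltac:(red; tauto) ltac:(lia) ltac:(lia)).
  rewrite (mu_ext mu (affine_image 2 1 _) (fun _ => False)) in E.
  - lra.
  - intro z; unfold affine_image; split; [intros [x [[] _]] | tauto].
Qed.

Lemma mu_empty_ext (A : Z -> Prop) : (forall z, ~ A z) -> mu A = 0.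
Proof. intros E. rewrite <- mu_empty. apply mu_ext. firstorder. Qed.

(* Subadditivity applied to A = A \/ A gives nonnegativity. *)
Lemma mu_nonneg (A : Z -> Prop) : subsetH H A -> 0 <= mu A.
Proof. intros HA. assert (E := mu_cover A A A HA HA ltac:(tauto)). lra. Qed.

Lemma singleton_subsetH (a : Z) : inH H a -> subsetH H (singleton a).
Proof. intros Ha z ->. exact Ha. Qed.

(* Translation invariance makes all singletons of H equally dense. *)
Lemma mu_singleton_translate (a b : Z) :
  inH H a -> inH H b -> mu (singleton a) = mu (singleton b).
Proof.
  assert (shift : forall a b, inH H a -> (a < b)%Z ->
                  mu (singleton b) = mu (singleton a)).
  { intros x y Hx Hxy.
    replace y with (1 * x + (y - x))%Z at 1 by ring.
    rewrite <- (mu_ext mu _ _ (affine_image_singleton 1 (y - x) x)).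
    rewrite mu_scale by (auto using singleton_subsetH; lia). lra. }
  intros Ha Hb. destruct (Z.lt_total a b) as [Hab | [-> | Hab]];
    [symmetry; auto | reflexivity | auto].
Qed.

(* {2a+1} = 2.{a} + 1 has both density mu {a} / 2 and mu {a}. *)
Lemma mu_singleton (a : Z) : inH H a -> mu (singleton a) = 0.
Proof.
  intros Ha.
  assert (Ha' := inH_affine H a 2 1 Ha ltac:(lia) ltac:(lia)).
  assert (E := mu_scale (singleton a) 1 2 (singleton_subsetH a Ha) ltac:(lia) ltac:(lia)).
  rewrite (mu_ext mu _ _ (affine_image_singleton 2 1 a)) in E.
  rewrite (mu_singleton_translate _ a Ha' Ha) in E. simpl IZR in E. lra.
Qed.

Lemma mu_finite (A : Z -> Prop) : subsetH H A -> finite_set A -> mu A = 0.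
Proof.
  intros HA [l Hl]. revert A HA Hl. induction l as [|a l IH]; intros A HA Hl.
  - apply mu_empty_ext. intros z Hz. exact (Hl z Hz).
  - assert (S1 : subsetH H (fun z => A z /\ z = a)) by (intros z [Hz _]; auto).
    assert (S2 : subsetH H (fun z => A z /\ z <> a)) by (intros z [Hz _]; auto).
    assert (E := mu_cover A _ _ S1 S2
                   ltac:(intro z; destruct (Z.eq_dec z a); tauto)).
    assert (E1 : mu (fun z => A z /\ z = a) = 0).
    { destruct (classic (A a)) as [Ha | Ha].
      - rewrite <- (mu_singleton a (HA a Ha)). apply mu_ext.
        intro z; unfold singleton; split; [tauto | intros ->; auto].
      - apply mu_empty_ext. intros z [Hz ->]. auto. }
    assert (E2 : mu (fun z => A z /\ z <> a) = 0).
    { apply IH; auto. intros z [Hz Hne]. destruct (Hl z Hz); [congruence | auto]. }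
    pose proof (mu_nonneg A HA). lra.
Qed.

Lemma mu_bigU (js : list Z) (F : Z -> Z -> Prop) (c : R) :
  (forall j, In j js -> subsetH H (F j)) ->
  (forall j, In j js -> mu (F j) <= c) ->
  mu (bigU js F) <= INR (length js) * c.
Proof.
  induction js as [|a js IH]; intros HF Hc.
  - rewrite mu_empty_ext by (intros z [j [[] _]]). simpl. lra.
  - assert (Hsub : subsetH H (bigU js F))
      by (intros z [j [Hj Hz]]; apply (HF j); simpl; auto).
    assert (E := mu_cover (bigU (a :: js) F) _ _ (HF a (or_introl eq_refl)) Hsub
      ltac:(intro z; unfold bigU; simpl; firstorder congruence)).
    assert (E2 := IH ltac:(intros; apply HF; simpl; auto)
                     ltac:(intros; apply Hc; simpl; auto)).
    assert (E3 := Hc a (or_introl eq_refl)).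
    simpl length. rewrite S_INR. lra.
Qed.

(* The scaling axiom applied to H itself. *)
Lemma mu_residue_class (k j : Z) :
  (1 <= k)%Z -> (1 <= j)%Z -> mu (residue_class H k j) = / IZR k.
Proof.
  intros Hk Hj. unfold residue_class.
  rewrite mu_scale by (auto; intros z Hz; exact Hz). rewrite mu_H. lra.
Qed.

(* The trace of A in a residue class is a scaled copy k.A' + j of a subset
   A' of H, hence has density at most 1/k. *)
Lemma mu_residue_slice (A : Z -> Prop) (k j : Z) :
  (1 <= k)%Z -> (1 <= j)%Z -> mu (fun z => A z /\ residue_class H k j z) <= / IZR k.
Proof.
  intros Hk Hj.
  set (A' := fun x => inH H x /\ A (k * x + j)%Z).
  assert (HA' : subsetH H A') by (intros x [Hx _]; exact Hx).
  rewrite (mu_ext mu _ (affine_image k j A')).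
  - rewrite mu_scale by auto.
    assert (Hk' : 0 < / IZR k) by (apply Rinv_0_lt_compat, IZR_lt; lia).
    pose proof (mu_le_1 A' HA'). nra.
  - intro z; unfold A', residue_class, affine_image; split.
    + intros [Hz [x [Hx ->]]]. exists x; auto.
    + intros [x [[Hx Hz] ->]]. split; [auto | exists x; auto].
Qed.

Section ResidueUnion.

Variable k : Z.
Hypothesis Hk : (1 <= k)%Z.
Variable good : Z -> bool.

Let goods : list Z := filter good (residues k).
Let bads : list Z := filter (fun j => negb (good j)) (residues k).

Lemma mu_le_residue_union (A : Z -> Prop) :
  subsetH H A -> finite_set (fun z => A z /\ ~ residue_union H k good z) ->
  mu A <= INR (length goods) * / IZR k.
Proof.
  intros HA Hfin.
  set (slices := fun j z => A z /\ residue_class H k j z).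
  assert (Hslices : subsetH H (bigU goods slices))
    by (intros z [j [_ [Hz _]]]; auto).
  assert (Hrest : subsetH H (fun z => A z /\ ~ residue_union H k good z))
    by (intros z [Hz _]; auto).
  assert (Hsplit : forall z,
            A z <-> bigU goods slices z \/ (A z /\ ~ residue_union H k good z)).
  { intro z; unfold bigU, slices, residue_union; split; [|firstorder].
    intro Hz. destruct (classic (residue_union H k good z)) as [[j Hj] | Hn];
      [left; exists j | right]; tauto. }
  assert (E := mu_cover A _ _ Hslices Hrest Hsplit).
  rewrite (mu_finite _ Hrest Hfin) in E.
  assert (Eb : mu (bigU goods slices) <= INR (length goods) * / IZR k).
  { apply mu_bigU.
    - intros j _ z [Hz _]. auto.
    - intros j Hj. apply filter_In in Hj as [Hj _]. apply in_residues in Hj.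
      apply mu_residue_slice; lia. }
  lra.
Qed.

(* Lower bound: H is almost covered by Y and the b unselected classes, so
   a set Y almost containing the selected classes has density >= 1 - b/k. *)
Lemma mu_ge_residue_union (Y : Z -> Prop) :
  subsetH H Y -> finite_set (fun z => residue_union H k good z /\ ~ Y z) ->
  1 <= mu Y + INR (length bads) * / IZR k.
Proof.
  intros HY Hfin.
  set (C := residue_class H k).
  assert (HC : forall j, In j bads -> subsetH H (C j)).
  { intros j Hj. apply filter_In in Hj as [Hj _]. apply in_residues in Hj.
    exact (residue_class_subsetH H k j Hk ltac:(lia)). }
  set (F := fun z => inH H z /\ ~ Y z /\ ~ bigU bads C z).
  assert (HF : subsetH H F) by (intros z [Hz _]; exact Hz).
  assert (Hbads : subsetH H (bigU bads C)) by (intros z [j [Hj Hz]]; exact (HC j Hj z Hz)).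
  assert (Hrest : subsetH H (set_union (bigU bads C) F))
    by (intros z [Hz | Hz]; auto).
  assert (Hsplit : forall z, inH H z <-> Y z \/ set_union (bigU bads C) F z).
  { intro z; split; [|intros [Hz | Hz]; [exact (HY z Hz) | exact (Hrest z Hz)]].
    intro Hz. unfold set_union, F.
    destruct (classic (Y z)); [|destruct (classic (bigU bads C z))]; tauto. }
  assert (E1 := mu_cover (inH H) _ _ HY Hrest Hsplit).
  assert (E2 := mu_subadd _ _ Hbads HF).
  (* A point of F lying in some class k.H + j lies in a selected class,
     hence in the finite set residue_union \ Y. *)
  assert (EF : mu F = 0).
  { apply (mu_finite F HF).
    eapply finite_subset; [|exact (finite_union _ _ Hfin (residue_classes_cover H k Hk))].
    intros z [Hz [HYz Hbad]].
    destruct (classic (exists j, In j (residues k) /\ C j z)) as [[j [Hj HCz]] | Hn];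
      [left | right; tauto].
    split; [|exact HYz].
    destruct (good j) eqn:Hg.
    - exists j. split; [apply filter_In; auto | exact HCz].
    - exfalso. apply Hbad. exists j. split; [apply filter_In; rewrite Hg; auto | exact HCz]. }
  assert (EB : mu (bigU bads C) <= INR (length bads) * / IZR k).
  { apply mu_bigU; [exact HC|]. intros j Hj. apply filter_In in Hj as [Hj _].
    apply in_residues in Hj. unfold C. rewrite mu_residue_class by lia. lra. }
  rewrite mu_H in E1. lra.
Qed.

Lemma residue_count :
  INR (length goods) * / IZR k + INR (length bads) * / IZR k = 1.
Proof.
  rewrite <- Rmult_plus_distr_r, <- plus_INR.
  unfold goods, bads. rewrite filter_length, length_residues.
  rewrite INR_IZR_INZ, Z2Nat.id by lia. field. apply not_0_IZR. lia.
Qed.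

Theorem mu_monotone_residue_union (X Y : Z -> Prop) :
  (forall z, X z -> Y z) -> subsetH H Y ->
  finite_set (sym_diff Y (residue_union H k good)) -> mu X <= mu Y.
Proof.
  intros HXY HY Hfin.
  assert (Hup : mu X <= INR (length goods) * / IZR k).
  { apply mu_le_residue_union; [intros z Hz; auto|].
    eapply finite_subset; [|exact Hfin]. intros z [Hz Hn]. left. auto. }
  assert (Hlo := mu_ge_residue_union Y HY ltac:(
    eapply finite_subset; [|exact Hfin]; intros z [Hz Hn]; right; auto)).
  pose proof residue_count. lra.
Qed.

End ResidueUnion.

End QuasiDensity.

Definition progression_bounds (ps : list (Z * Z)) : Prop :=
  forall p, In p ps -> (1 <= fst p)%Z /\ (0 <= snd p)%Z.

Lemma common_modulus (ps : list (Z * Z)) : progression_bounds ps ->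
  exists k M, (1 <= k)%Z /\
    forall p, In p ps -> (fst p | k)%Z /\ (fst p + snd p <= M)%Z.
Proof.
  induction ps as [|a ps IH]; intros Hps.
  - exists 1%Z, 0%Z. split; [lia | intros p []].
  - destruct IH as [k [M [Hk HkM]]]; [intros p Hp; apply Hps; simpl; auto|].
    destruct (Hps a (or_introl eq_refl)) as [Ha _].
    exists (fst a * k)%Z, (Z.max M (fst a + snd a))%Z. split; [nia|].
    intros p [<- | Hp].
    + split; [apply Z.divide_factor_l | lia].
    + destruct (HkM p Hp) as [Hd HM].
      split; [apply Z.divide_mul_r; exact Hd | lia].
Qed.

Definition progression_residue (ps : list (Z * Z)) (j : Z) : bool :=
  existsb (fun p => Z.eqb ((j - snd p) mod fst p) 0) ps.

Lemma progression_residue_spec (ps : list (Z * Z)) (j : Z) : progression_bounds ps ->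
  progression_residue ps j = true <-> exists p, In p ps /\ (fst p | j - snd p)%Z.
Proof.
  intros Hps. unfold progression_residue. rewrite existsb_exists.
  split; intros [p [Hp E]]; exists p; split; auto; destruct (Hps p Hp).
  - apply Z.mod_divide; [lia | apply Z.eqb_eq, E].
  - apply Z.eqb_eq, Z.mod_divide; [lia | exact E].
Qed.

Lemma union_APs_large (H : HKind) (ps : list (Z * Z)) (k M z : Z) :
  progression_bounds ps -> (1 <= k)%Z -> (2 * k <= M)%Z ->
  (forall p, In p ps -> (fst p | k)%Z /\ (fst p + snd p <= M)%Z) ->
  large H M z ->
  (union_APs H ps z <-> residue_union H k (progression_residue ps) z).
Proof.
  intros Hps Hk HkM Hdiv Hz.
  assert (Hclass : forall j, In j (residues k) ->
            residue_class H k j z <-> (k | z - j)%Z).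
  { intros j Hj. apply in_residues in Hj. apply (progression_large H k j M); auto; lia. }
  assert (Hprog : forall p, In p ps ->
            affine_image (fst p) (snd p) (inH H) z <-> (fst p | z - snd p)%Z).
  { intros p Hp. destruct (Hps p Hp), (Hdiv p Hp). apply (progression_large H _ _ M); auto. }
  split.
  - intros [p [Hp Hpz]]. apply Hprog in Hpz; [|exact Hp].
    destruct (residue_representative k z Hk) as [j [Hj Hkj]].
    exists j. split; [apply filter_In; split; [exact Hj|] | apply Hclass; auto].
    apply progression_residue_spec; [exact Hps|]. exists p. split; [exact Hp|].
    replace (j - snd p)%Z with ((z - snd p) - (z - j))%Z by ring.
    apply Z.divide_sub_r; [exact Hpz | apply (Z.divide_trans _ k); [apply Hdiv|]; auto].
  - intros [j [Hj Hjz]]. apply filter_In in Hj as [Hj Hgood].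
    apply Hclass in Hjz; [|exact Hj].
    apply progression_residue_spec in Hgood as [p [Hp Hpj]]; [|exact Hps].
    exists p. split; [exact Hp|]. apply Hprog; [exact Hp|].
    replace (z - snd p)%Z with ((z - j) + (j - snd p))%Z by ring.
    apply Z.divide_add_r; [apply (Z.divide_trans _ k); [apply Hdiv|]|]; auto.
Qed.

Lemma almost_AP_union_residues (H : HKind) (Y : Z -> Prop) :
  subsetH H Y -> almost_AP_union H Y ->
  exists k good, (1 <= k)%Z /\ finite_set (sym_diff Y (residue_union H k good)).
Proof.
  intros HY [ps [Hps Hfin]].
  destruct (common_modulus ps Hps) as [k [M [Hk Hdiv]]].
  set (M' := Z.max M (2 * k)).
  exists k, (progression_residue ps). split; [exact Hk|].
  eapply finite_subset; [|exact (finite_union _ _ Hfin (finite_not_large H M'))].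
  intros z Hz. destruct (classic (large H M' z)) as [Hl | Hl].
  - left. assert (E : union_APs H ps z <-> residue_union H k (progression_residue ps) z).
    { apply (union_APs_large H ps k M'); auto; [lia|].
      intros p Hp. destruct (Hdiv p Hp). split; [auto | lia]. }
    unfold sym_diff in *. tauto.
  - right. split; [|exact Hl].
    destruct Hz as [[Hz _] | [Hz _]]; [exact (HY z Hz)|].
    exact (residue_union_subsetH H k _ Hk z Hz).
Qed.

Theorem mainTheorem7 (H : HKind) (mu : (Z -> Prop) -> R) (X Y : Z -> Prop) :
  upper_quasi_density H mu ->
  (forall z, X z -> Y z) ->
  subsetH H Y ->
  almost_AP_union H Y ->
  mu X <= mu Y.
Proof.
  intros Hmu HXY HY HAP.
  destruct (almost_AP_union_residues H Y HY HAP) as [k [good [Hk Hfin]]].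
  exact (mu_monotone_residue_union H mu Hmu k Hk good X Y HXY HY Hfin).
Qed.
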